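(* Let $n\ge 1$, $m\ge 2$, $0\le k\le n-1$ with $(m,k)\ne(2,0)$. Then the class $\mathcal{C}^k_{ac}$ of all complete $k$-bounded acyclic CP-nets over $n$ variables of domain size $m$, over the instance space $\mathcal{X}_{swap}$, is not maximal; in particular, it is not maximum.
   Context: Variables $V=\{v_1,\dots,v_n\}$, each with a finite domain of size $m$. An outcome assigns a value to every variable; $\mathcal{O}_X$ denotes assignments to $X\subseteq V$. A complete CP-net specifies for each $v_i$ a parent set $Pa(v_i)\subseteq V\setminus\{v_i\}$ and, for each context $\gamma\in\mathcal{O}_{Pa(v_i)}$, a strict total order $\succ^{v_i}_\gamma$ on $D_{v_i}$; parents are non-dummy. Acyclic: graph with edges $(v_j,v_i)$, $v_j\in Pa(v_i)$, acyclic; $k$-bounded: all $|Pa(v_i)|\le k$. Improving flip: changing only $v_i$ to a value preferred under $\succ^{v_i}_{o[Pa(v_i)]}$; $o'\succ o$ iff a nonempty sequence of improving flips leads from $o$ to $o'$. A swap is an ordered pair $x=(x.1,x.2)$ of outcomes differing in exactly one variable; $\mathcal{X}_{swap}$ contains exactly one ordering of each such pair (fixed arbitrarily); a CP-net $N$ is the concept $c_N(x)=1$ iff $x.1\succ x.2$. For a finite class $\mathcal{C}$ over instance space $\mathcal{X}$ with VC dimension $d$: $\mathcal{C}$ is maximum if $|\mathcal{C}|=\sum_{i=0}^d\binom{|\mathcal{X}|}{i}$; $\mathcal{C}$ is maximal if adding any concept over $\mathcal{X}$ not in $\mathcal{C}$ increases the VC dimension. *)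

From mathcomp Require Import all_boot fingroup perm.
Set Implicit Arguments. Unset Strict Implicit. Unset Printing Implicit Defensive.

Section VC.
Variable X : finType.

Definition shattered (C : {set {ffun X -> bool}}) (S : {set X}) : bool :=
  [forall B : {set X}, (B \subset S) ==>
     [exists c in C, [set x in S | c x] == B]].

Definition vcdim (C : {set {ffun X -> bool}}) : nat :=
  \max_(S : {set X} | shattered C S) #|S|.

Definition is_maximum (C : {set {ffun X -> bool}}) : Prop :=
  #|C| = \sum_(i < (vcdim C).+1) 'C(#|X|, i).

Definition is_maximal (C : {set {ffun X -> bool}}) : Prop :=
  forall c : {ffun X -> bool}, c \notin C -> vcdim C < vcdim (c |: C).
End VC.

Section CPnets.
Variables n m : nat.

Definition outcome := {ffun 'I_n -> 'I_m}.

Definition is_swap (o o' : outcome) : bool := #|[set i | o i != o' i]| == 1.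

(* A complete CP-net is given by parent sets and, for each variable v and
   each outcome o, a strict total order on the domain of v, encoded by a
   permutation p (value a is preferred to b iff p a < p b). The order may only
   depend on the values of the parents (i.e. it is a function of the context). *)
Definition cpnet := ({ffun 'I_n -> {set 'I_n}} * {ffun 'I_n -> {ffun outcome -> {perm 'I_m}}})%type.

Definition Pa (N : cpnet) (v : 'I_n) : {set 'I_n} := N.1 v.
Definition cpt (N : cpnet) (v : 'I_n) (o : outcome) : {perm 'I_m} := N.2 v o.

Definition prefv (N : cpnet) (v : 'I_n) (o : outcome) (a b : 'I_m) : bool :=
  (cpt N v o a < cpt N v o b)%N.

Definition cpt_contextual (N : cpnet) : bool :=
  [forall v : 'I_n, forall o : outcome, forall o' : outcome,
     [forall u in Pa N v, o u == o' u] ==> (cpt N v o == cpt N v o')].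

Definition no_self_parent (N : cpnet) : bool := [forall v : 'I_n, v \notin Pa N v].

Definition nondummy (N : cpnet) : bool :=
  [forall v : 'I_n, forall u in Pa N v, exists o : outcome, exists o' : outcome,
     [forall w : 'I_n, (w != u) ==> (o w == o' w)] && (cpt N v o != cpt N v o')].

Definition parent_edge (N : cpnet) : rel 'I_n := fun u v => u \in Pa N v.

Definition acyclic (N : cpnet) : bool :=
  [forall u : 'I_n, forall v : 'I_n, parent_edge N u v ==> ~~ connect (parent_edge N) v u].

Definition k_bounded (k : nat) (N : cpnet) : bool :=
  [forall v : 'I_n, #|Pa N v| <= k].

Definition valid_cpnet (N : cpnet) : bool :=
  [&& no_self_parent N, cpt_contextual N & nondummy N].

Definition improving_flip (N : cpnet) : rel outcome := fun o o' =>
  [exists v : 'I_n, [forall w : 'I_n, (w != v) ==> (o w == o' w)] && prefv N v o (o' v) (o v)].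

Definition preferred (N : cpnet) (o' o : outcome) : bool :=
  [exists o1 : outcome, improving_flip N o o1 && connect (improving_flip N) o1 o'].

(* X_swap: a set of ordered pairs containing exactly one ordering of each swap *)
Definition swap_orientation (Xs : {set outcome * outcome}) : Prop :=
  (forall x, x \in Xs -> is_swap x.1 x.2) /\
  (forall o o', is_swap o o' -> ((o, o') \in Xs) != ((o', o) \in Xs)).

Definition swap_space (Xs : {set outcome * outcome}) : finType :=
  {x : outcome * outcome | x \in Xs}.

Definition concept_of (Xs : {set outcome * outcome}) (N : cpnet)
  : {ffun swap_space Xs -> bool} :=
  [ffun x : swap_space Xs => preferred N (val x).1 (val x).2].

Definition C_ac (k : nat) (Xs : {set outcome * outcome})
  : {set {ffun swap_space Xs -> bool}} :=
  [set c | [exists N : cpnet,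
     [&& valid_cpnet N, acyclic N, k_bounded k N & c == concept_of Xs N]]].
End CPnets.

(* Reversing every conditional preference table of an acyclic CP-net reverses
   its comparison of every swap, because on a swap the induced preference is
   decided by a single table entry. Hence the class of k-bounded acyclic CP-nets
   is closed under complementation. For a complement-closed class C and a new
   concept c, every set shattered by c |: C is already shattered by C, so adding
   c keeps the VC dimension: C is not maximal, and the Sauer-Shelah bound for
   c |: C shows that C is not maximum either. A concept outside the class comes
   from orienting a cycle of swaps (three values of one variable if m >= 3, a
   square on two binary variables if m = 2, where then n >= 2): the preference
   relation of an acyclic CP-net is a strict partial order that is total on
   swaps, so no CP-net realises it. *)

From mathcomp Require Import all_boot fingroup perm.
From mathcomp Require Import zify.
Set Implicit Arguments. Unset Strict Implicit. Unset Printing Implicit Defensive.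

Section VapnikChervonenkis.
Variable X : finType.
Implicit Types (C D : {set {ffun X -> bool}}) (c d : {ffun X -> bool}) (S B : {set X}).

Definition compl_concept c : {ffun X -> bool} := [ffun x => ~~ c x].

Lemma shatteredP C S :
  reflect (forall B, B \subset S -> exists2 c, c \in C & [set x in S | c x] = B)
          (shattered C S).
Proof.
apply: (iffP forallP) => [shC B sBS | shC B]; last first.
  by apply/implyP => /shC[c cC cB]; apply/existsP; exists c; rewrite cC cB eqxx.
by have /existsP[c /andP[cC /eqP cB]] := implyP (shC B) sBS; exists c.
Qed.

Lemma shatteredS C D S : C \subset D -> shattered C S -> shattered D S.
Proof.
move=> sCD /shatteredP shC; apply/shatteredP => B /shC[c cC cB].
by exists c; rewrite ?(subsetP sCD).
Qed.

Lemma shattered0 C : C != set0 -> shattered C set0.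
Proof.
case/set0Pn=> c cC; apply/shatteredP => B; rewrite subset0 => /eqP ->.
by exists c => //; apply/setP => x; rewrite !inE.
Qed.

Lemma leq_card_vcdim C S : shattered C S -> #|S| <= vcdim C.
Proof. exact: leq_bigmax_cond. Qed.

Lemma leq_vcdim C D : (forall S, shattered C S -> shattered D S) -> vcdim C <= vcdim D.
Proof. by move=> shCD; apply/bigmax_leqP => S /shCD /leq_card_vcdim. Qed.

Lemma notin_shattered_const C S x b :
  {in C, forall c, c x = b} -> shattered C S -> x \notin S.
Proof.
move=> Cxb /shatteredP shC; apply/negP => xS.
have [c cC /setP/(_ x)] : exists2 c, c \in C & [set y in S | c y] = if b then set0 else S.
  by apply: shC; case: (b); rewrite ?sub0set.
by rewrite !inE xS Cxb //; case: (b); rewrite ?inE ?xS.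
Qed.

(* If the new concept [c] realises [B] on [S], the complement of a concept of
   [C] realising [S :\: B] realises [B] as well. *)
Lemma shattered_setU1_compl_closed C c S :
  C != set0 -> {in C, forall d, compl_concept d \in C} ->
  shattered (c |: C) S -> shattered C S.
Proof.
move=> C_neq0 closedC /shatteredP shcC; apply/shatteredP => B sBS.
have [c1 /setU1P[-> {c1} cB | c1C c1B]] := shcC B sBS; last by exists c1.
have [c2 /setU1P[-> {c2} cSB | c2C c2B]] := shcC (S :\: B) (subsetDl _ _).
  have S0 : S = set0.
    apply/setP => x; rewrite inE; apply/negP => xS.
    by have /setP/(_ x) := etrans (esym cSB) cB; rewrite !inE xS andbT; case: (x \in B).
  by have /shatteredP := shattered0 C_neq0; rewrite S0 in sBS *; apply.
exists (compl_concept c2); first exact: closedC.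
apply/setP => x; move/setP/(_ x): c2B; rewrite !inE ffunE.
case xS: (x \in S) => /=; first by rewrite andbT => ->; rewrite negbK.
by move=> _; apply/esym/negP => /(subsetP sBS); rewrite xS.
Qed.

Section SplitAtPoint.
Variables (D : {set {ffun X -> bool}}) (x : X).
Let T := [set d : {ffun X -> bool} | d x].

Lemma shattered_split S :
  shattered (D :\: T) S -> shattered (D :&: T) S -> shattered D (x |: S).
Proof.
move=> /shatteredP shF /shatteredP shT; apply/shatteredP => B sBxS.
have sBxS' : B :\ x \subset S.
  by apply/subsetP => y; rewrite !inE => /andP[yx /(subsetP sBxS)]; rewrite !inE (negbTE yx).
case xB: (x \in B).
  have [d] := shT _ sBxS'; rewrite !inE => /andP[dD dx] dB.
  exists d => //; apply/setP => y; move/setP/(_ y): dB; rewrite !inE.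
  by case: (eqVneq y x) => [-> | _ //] _; rewrite dx xB.
have sBS : B \subset S.
  apply/subsetP => y yB; apply: (subsetP sBxS'); rewrite !inE yB andbT.
  by apply: contraTneq yB => ->; rewrite xB.
have [d] := shF _ sBS; rewrite !inE => /andP[dx dD] dB.
exists d => //; apply/setP => y; move/setP/(_ y): dB; rewrite !inE.
by case: (eqVneq y x) => [-> | _ //] _; rewrite (negbTE dx) xB.
Qed.

Lemma card_shattered_split :
  #|[set S | shattered (D :\: T) S]| + #|[set S | shattered (D :&: T) S]|
    <= #|[set S | shattered D S]|.
Proof.
set A0 := [set S | _]; set A1 := [set S | _].
have xA0 S : S \in A0 -> x \notin S.
  rewrite inE; apply: (notin_shattered_const (b := false)) => d.
  by rewrite !inE => /andP[/negbTE].
have xA1 S : S \in A1 -> x \notin S.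
  by rewrite inE; apply: (notin_shattered_const (b := true)) => d; rewrite !inE => /andP[].
have injx : {in A0 :&: A1 &, injective (fun S => x |: S)}.
  move=> S1 S2 /setIP[/xA0 xS1 _] /setIP[/xA0 xS2 _] eqS.
  by rewrite -(setU1K xS1) -(setU1K xS2) eqS.
have disjA : [disjoint A0 :|: A1 & (fun S => x |: S) @: (A0 :&: A1)].
  rewrite -setI_eq0; apply/set0Pn => -[S' /setIP[AS' /imsetP[S _ eqS]]].
  by move: AS'; rewrite eqS => /setUP[/xA0 | /xA1]; rewrite setU11.
move: disjA; rewrite -cardsUI -(card_in_imset injx) -(eq_leqif (leq_card_setU _ _)) => /eqP <-.
apply/subset_leq_card/subsetP => S' /setUP[/setUP[] | /imsetP[S /setIP[shF shT] ->]].
- by rewrite !inE; apply: shatteredS; apply: subsetDl.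
- by rewrite !inE; apply: shatteredS; apply: subsetIl.
- by rewrite !inE in shF shT *; apply: shattered_split.
Qed.
End SplitAtPoint.

Lemma card_le_shattered D : #|D| <= #|[set S | shattered D S]|.
Proof.
have [s] := ubnP #|D|; elim: s D => // s IH D; rewrite ltnS => leDs.
have [D_le1 | /card_gt1P[d1 [d2 [d1D d2D d12]]]] := leqP #|D| 1.
  have [-> | D_neq0] := eqVneq D set0; first by rewrite cards0.
  apply: leq_trans D_le1 _; rewrite card_gt0; apply/set0Pn; exists set0.
  by rewrite inE shattered0.
have [x d12x] : exists x, d1 x != d2 x.
  apply/existsP; apply: contraNT d12 => /existsPn d12x.
  by apply/eqP/ffunP => x; apply/eqP/negbNE/d12x.
pose T := [set d : {ffun X -> bool} | d x].
have splitD := cardsID T D.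
have [DT_gt0 DF_gt0] : 0 < #|D :&: T| /\ 0 < #|D :\: T|.
  split; apply/card_gt0P; case: (boolP (d1 x)) => d1x;
    [exists d1 | exists d2 | exists d2 | exists d1];
    rewrite !inE ?d1D ?d2D ?d1x //=; by move: d12x d1x; case: (d1 x); case: (d2 x).
rewrite -splitD addnC; apply: leq_trans (card_shattered_split D x).
apply: leq_add; apply: IH; apply: leq_trans leDs; rewrite -splitD.
  by rewrite -[X in X < _]add0n ltn_add2r.
by rewrite -[X in X < _]addn0 ltn_add2l.
Qed.

Lemma card_small_subsets k :
  #|[set S : {set X} | #|S| <= k]| = \sum_(i < k.+1) 'C(#|X|, i).
Proof.
elim: k => [|k IH].
  by rewrite big_ord1 -card_draws; apply: eq_card => S; rewrite !inE leqn0.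
rewrite big_ord_recr /= -IH -card_draws -cardsUI.
have -> : [set S : {set X} | #|S| <= k] :&: [set S : {set X} | #|S| == k.+1] = set0.
  by apply/setP => S; rewrite !inE andbC; case: eqP => // ->; rewrite ltnn.
by rewrite cards0 addn0; apply: eq_card => S; rewrite !inE leq_eqVlt ltnS orbC.
Qed.

Lemma sauer_shelah C : #|C| <= \sum_(i < (vcdim C).+1) 'C(#|X|, i).
Proof.
rewrite -card_small_subsets; apply: leq_trans (card_le_shattered C) _.
by apply/subset_leq_card/subsetP => S; rewrite !inE; apply: leq_card_vcdim.
Qed.

Lemma compl_closed_not_maximal C c :
  C != set0 -> {in C, forall d, compl_concept d \in C} -> c \notin C ->
  ~ is_maximal C /\ ~ is_maximum C.
Proof.
move=> C_neq0 closedC cC.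
have vcdim_cC : vcdim (c |: C) = vcdim C.
  apply/eqP; rewrite eqn_leq; apply/andP; split; apply: leq_vcdim => S.
    exact: shattered_setU1_compl_closed.
  by apply: shatteredS; apply: subsetUr.
split=> [/(_ c cC) | maxC]; first by rewrite vcdim_cC ltnn.
by have := sauer_shelah (c |: C); rewrite vcdim_cC -maxC cardsU1 cC ltnn.
Qed.
End VapnikChervonenkis.

Lemma path_nonincreasing (T : eqType) (e : rel T) (f : T -> nat) x p :
  (forall y z, y \in x :: p -> e y z -> f z <= f y) -> path e x p ->
  {in x :: p, forall y, f (last x p) <= f y <= f x}.
Proof.
elim: p x => [|y p IH] x mono /=; first by move=> _ z; rewrite inE => /eqP ->; rewrite leqnn.
case/andP=> exy pyp.
have fyx : f y <= f x by apply: mono exy; rewrite mem_head.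
have IHy := IH y (fun z t zp => mono z t (@mem_behead _ (x :: y :: p) z zp)) pyp.
move=> z; rewrite inE => /predU1P[-> | zp]; last first.
  by have /andP[-> zy] := IHy z zp; rewrite (leq_trans zy fyx).
by have /andP[ly _] := IHy y (mem_head _ _); rewrite (leq_trans ly fyx) leqnn.
Qed.

Section CPnets.
Variables n m : nat.
Implicit Types (N : cpnet n m) (a o p q y z : outcome n m) (u v w : 'I_n).
Implicit Types (Xs F : {set outcome n m * outcome n m}).

Lemma preferred_trans N : transitive (preferred N).
Proof.
move=> b a c /existsP[o1 /andP[flip1 conn1]] /existsP[o2 /andP[flip2 conn2]].
apply/existsP; exists o2; rewrite flip2 /=.
exact: connect_trans conn2 (connect_trans (connect1 flip1) conn1).
Qed.

Definition ancestors N v := [set u | connect (parent_edge N) u v].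

Lemma ancestors_proper N u v :
  acyclic N -> u \in Pa N v -> ancestors N u \proper ancestors N v.
Proof.
move=> acyc uv; apply/properP; split.
  by apply/subsetP => w; rewrite !inE => /connect_trans; apply; apply: connect1.
exists v; rewrite !inE ?connect0 //.
exact: (implyP (forallP (forallP acyc u) v) uv).
Qed.

Lemma flip_cycle_fixes N a s v :
  cpt_contextual N -> path (improving_flip N) a s -> last a s = a ->
  (forall u, u \in Pa N v -> {in s, forall y, y u = a u}) ->
  {in s, forall y, y v = a v}.
Proof.
move=> ctx flips cyc fix_pa.
have cpt_a y : y \in a :: s -> cpt N v y = cpt N v a.
  case/predU1P=> [-> // | ys]; apply/eqP.
  apply: (implyP (forallP (forallP (forallP ctx v) y) a)).
  by apply/forallP => u; apply/implyP => uv; rewrite (fix_pa u uv y ys).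
pose rank y := cpt N v a (y v).
have rank_flip y z : y \in a :: s -> improving_flip N y z -> rank z <= rank y.
  move=> ys /existsP[w /andP[/forallP same pref]].
  have [wv | wv] := eqVneq w v; first by move: pref; rewrite wv /prefv cpt_a // => /ltnW.
  by move: (same v); rewrite eq_sym wv => /eqP; rewrite /rank => ->.
move=> y ys; have /andP[] := path_nonincreasing rank_flip flips (@mem_behead _ (a :: s) y ys).
rewrite cyc => ra ar; apply: (@perm_inj _ (cpt N v a)); apply: val_inj.
by apply/eqP; rewrite eqn_leq ar ra.
Qed.

Lemma preferred_irrefl N a : cpt_contextual N -> acyclic N -> ~~ preferred N a a.
Proof.
move=> ctx acyc; apply/negP => /existsP[o1 /andP[flip1 /connectP[s flips o1a]]].
have cyc : last a (o1 :: s) = a by rewrite /= -o1a.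
have flips' : path (improving_flip N) a (o1 :: s) by rewrite /= flip1.
have fixed v : {in o1 :: s, forall y, y v = a v}.
  have [k] := ubnP #|ancestors N v|; elim: k v => // k IH v.
  rewrite ltnS => ancs; apply: (flip_cycle_fixes ctx flips' cyc) => u uv; apply: IH.
  exact: leq_trans (proper_card (ancestors_proper acyc uv)) ancs.
have o1_eq_a : o1 = a by apply/ffunP => v; apply: fixed; apply: mem_head.
by move: flip1 => /existsP[v /andP[_]]; rewrite /prefv o1_eq_a ltnn.
Qed.

Lemma is_swapP p q :
  reflect (exists2 v, p v != q v & forall w, w != v -> p w = q w) (is_swap p q).
Proof.
apply: (iffP cards1P) => [[v /setP diff_v] | [v pqv same]].
  exists v => [|w wv]; first by have := diff_v v; rewrite !inE eqxx.
  by have := diff_v w; rewrite !inE (negbTE wv) => /negbFE/eqP.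
exists v; apply/setP => w; rewrite !inE.
by have [-> | wv] := eqVneq w v; rewrite ?pqv ?(same w wv) ?eqxx ?(negbTE wv).
Qed.

Lemma prefv_agree N p q v : valid_cpnet N ->
  (forall w, w != v -> p w = q w) -> prefv N v p = prefv N v q.
Proof.
case/and3P=> noself ctx _ same; rewrite /prefv.
suff -> : cpt N v p = cpt N v q by [].
apply/eqP/(implyP (forallP (forallP (forallP ctx v) p) q)).
apply/forallP => u; apply/implyP => uv; rewrite same //.
by apply: contraTneq uv => ->; apply: (forallP noself).
Qed.

Lemma prefv_swapped N v o (a b : 'I_m) :
  a != b -> prefv N v o b a = ~~ prefv N v o a b.
Proof.
by move=> ab; rewrite /prefv ltnNge leq_eqVlt val_eqE (inj_eq perm_inj) (negbTE ab).
Qed.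

Lemma improving_flip_at N p q v : (forall w, w != v -> p w = q w) ->
  prefv N v p (q v) (p v) -> improving_flip N p q.
Proof.
move=> same pref; apply/existsP; exists v; rewrite pref andbT.
by apply/forallP => w; apply/implyP => wv; rewrite same.
Qed.

Lemma preferred_swap N p q v : valid_cpnet N -> acyclic N -> p v != q v ->
  (forall w, w != v -> p w = q w) -> preferred N p q = prefv N v q (p v) (q v).
Proof.
move=> valid acyc pqv same.
have same' w : w != v -> q w = p w by move/same.
have [pref | npref] := boolP (prefv N v q (p v) (q v)).
  by apply/existsP; exists p; rewrite (improving_flip_at same' pref) connect0.
apply/negbTE/negP => pq.
have flip_pq : improving_flip N p q.
  by apply: (improving_flip_at same); rewrite (prefv_agree valid same) prefv_swapped.
have qp : preferred N q p by apply/existsP; exists q; rewrite flip_pq connect0.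
case/and3P: valid => _ ctx _.
by have := preferred_irrefl p ctx acyc; rewrite (preferred_trans pq qp).
Qed.

Lemma preferred_swap_total N p q : valid_cpnet N -> acyclic N -> is_swap p q ->
  preferred N p q || preferred N q p.
Proof.
move=> valid acyc /is_swapP[v pqv same].
have same' w : w != v -> q w = p w by move/same.
rewrite (preferred_swap valid acyc pqv same) (preferred_swap valid acyc _ same') 1?eq_sym //.
by rewrite (prefv_agree valid same) prefv_swapped ?orNb 1?eq_sym.
Qed.

Definition rev_perm : {perm 'I_m} := perm (@rev_ord_inj m).

Definition reverse_net N : cpnet n m :=
  (N.1, [ffun v => [ffun o => (N.2 v o * rev_perm)%g]]).

Lemma cpt_reverse N v o : cpt (reverse_net N) v o = (cpt N v o * rev_perm)%g.
Proof. by rewrite /cpt !ffunE. Qed.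

Lemma prefv_reverse N v o (a b : 'I_m) : prefv (reverse_net N) v o a b = prefv N v o b a.
Proof.
rewrite /prefv !cpt_reverse !permM !permE /=.
by have := ltn_ord (cpt N v o a); have := ltn_ord (cpt N v o b); lia.
Qed.

Lemma valid_reverse N : valid_cpnet N -> valid_cpnet (reverse_net N).
Proof.
case/and3P=> noself ctx nondum; apply/and3P; split=> //.
  apply/forallP => v; apply/forallP => o; apply/forallP => o'; apply/implyP => same.
  by rewrite !cpt_reverse (eqP (implyP (forallP (forallP (forallP ctx v) o) o') same)).
apply/forallP => v; apply/forallP => u; apply/implyP => uv.
have /existsP[o /existsP[o' /andP[same neq]]] := implyP (forallP (forallP nondum v) u) uv.
apply/existsP; exists o; apply/existsP; exists o'; rewrite same !cpt_reverse /=.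
by apply: contra neq => /eqP/mulIg ->.
Qed.

Lemma preferred_reverse N p q : valid_cpnet N -> acyclic N -> is_swap p q ->
  preferred (reverse_net N) p q = ~~ preferred N p q.
Proof.
move=> valid acyc /is_swapP[v pqv same].
rewrite (preferred_swap valid acyc pqv same).
rewrite (preferred_swap (valid_reverse valid) acyc pqv same).
by rewrite prefv_reverse prefv_swapped.
Qed.

Definition empty_net : cpnet n m := ([ffun => set0], [ffun => [ffun => 1%g]]).

Lemma C_ac_neq0 k Xs : C_ac k Xs != set0.
Proof.
apply/set0Pn; exists (concept_of Xs empty_net); rewrite inE.
apply/existsP; exists empty_net; rewrite eqxx andbT.
have no_parents v : Pa empty_net v = set0 by rewrite /Pa ffunE.
apply/and3P; split; [apply/and3P; split | |]; apply/forallP => v.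
- by rewrite no_parents inE.
- by do 2!apply/forallP => ?; rewrite /cpt !ffunE eqxx implybT.
- by apply/forallP => u; rewrite no_parents inE.
- by apply/forallP => u; rewrite /parent_edge no_parents inE.
- by rewrite no_parents cards0.
Qed.

Lemma C_ac_compl_closed k Xs : swap_orientation Xs ->
  {in C_ac k Xs, forall c, compl_concept c \in C_ac k Xs}.
Proof.
move=> [swapsXs _] c; rewrite !inE => /existsP[N /and4P[valid acyc kbd /eqP ->]].
apply/existsP; exists (reverse_net N); rewrite valid_reverse //=.
apply/and3P; split=> //; apply/eqP/ffunP => x.
by rewrite !ffunE preferred_reverse //; apply: swapsXs (valP x).
Qed.

Lemma preferred_of_concept Xs F N p q :
  swap_orientation Xs -> valid_cpnet N -> acyclic N ->
  concept_of Xs N = [ffun x => val x \in F] ->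
  is_swap p q -> (p, q) \in F -> (q, p) \notin F -> preferred N p q.
Proof.
move=> [_ orientXs] valid acyc concN pq pqF qpF.
have [pqXs | pqXs] := boolP ((p, q) \in Xs).
  by move/ffunP: concN => /(_ (Sub (p, q) pqXs)); rewrite !ffunE /= pqF.
have qpXs : (q, p) \in Xs.
  by move: (orientXs p q pq); rewrite (negbTE pqXs); case: ((q, p) \in Xs).
move/ffunP: concN => /(_ (Sub (q, p) qpXs)); rewrite !ffunE /= (negbTE qpF) => qp.
by have := preferred_swap_total valid acyc pq; rewrite qp orbF.
Qed.

(* [(p, q) \in F] reads "p is preferred to q". *)
Definition cyclic_swaps F : Prop :=
  (forall p q, (p, q) \in F -> is_swap p q /\ (q, p) \notin F) /\
  (forall R : rel (outcome n m), transitive R ->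
     (forall p q, (p, q) \in F -> R p q) -> exists a, R a a).

Lemma cyclic_concept_notin_C_ac k Xs F : swap_orientation Xs -> cyclic_swaps F ->
  [ffun x : swap_space Xs => val x \in F] \notin C_ac k Xs.
Proof.
move=> orientXs [swapsF cycF]; rewrite inE; apply/existsP => -[N].
case/and4P=> valid acyc _ /eqP concN.
have F_preferred p q : (p, q) \in F -> preferred N p q.
  move=> pqF; have [pq qpF] := swapsF p q pqF.
  exact: preferred_of_concept orientXs valid acyc (esym concN) pq pqF qpF.
have [a] := cycF _ (@preferred_trans N) F_preferred.
by apply/negP; apply: preferred_irrefl acyc; case/and3P: valid.
Qed.

End CPnets.

Section ThreeValueCycle.
Variables n' m' : nat.

Let outcome_of (a : 'I_m'.+3) : outcome n'.+1 m'.+3 :=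
  [ffun i => if i == ord0 then a else ord0].

Let swap_outcome_of a b : a != b -> is_swap (outcome_of a) (outcome_of b).
Proof.
move=> ab; apply/is_swapP; exists ord0 => [|w /negbTE w0]; rewrite !ffunE ?eqxx ?w0 //.
Qed.

Let outcome_of_eq a b : (outcome_of a == outcome_of b) = (a == b).
Proof. by apply/eqP/eqP => [/ffunP/(_ ord0) | ->]; rewrite ?ffunE. Qed.

Let v0 : 'I_m'.+3 := Ordinal (isT : 0 < m'.+3).
Let v1 : 'I_m'.+3 := Ordinal (isT : 1 < m'.+3).
Let v2 : 'I_m'.+3 := Ordinal (isT : 2 < m'.+3).

Lemma three_value_cycle : exists F, @cyclic_swaps n'.+1 m'.+3 F.
Proof.
exists [set (outcome_of v1, outcome_of v0); (outcome_of v2, outcome_of v1);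
            (outcome_of v0, outcome_of v2)]; split.
  move=> p q; rewrite !inE => /orP[/orP[] | ] /eqP[-> ->];
    by split; [apply: swap_outcome_of | rewrite !xpair_eqE !outcome_of_eq].
move=> R trR inF; exists (outcome_of v0).
apply: (trR (outcome_of v2)); first by apply: inF; rewrite !inE eqxx !orbT.
by apply: (trR (outcome_of v1)); apply: inF; rewrite !inE eqxx ?orbT.
Qed.
End ThreeValueCycle.

Section BinarySquareCycle.
Variable n' : nat.

Let w1 : 'I_n'.+2 := Ordinal (isT : 1 < n'.+2).
Let b0 : 'I_2 := Ordinal (isT : 0 < 2).
Let b1 : 'I_2 := Ordinal (isT : 1 < 2).

Let outcome_of (a b : 'I_2) : outcome n'.+2 2 :=
  [ffun i => if i == ord0 then a else if i == w1 then b else ord0].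

Let swap_outcome_of_first a a' b : a != a' -> is_swap (outcome_of a b) (outcome_of a' b).
Proof.
move=> aa'; apply/is_swapP; exists ord0 => [|w /negbTE w0]; rewrite !ffunE ?eqxx ?w0 //.
Qed.

Let swap_outcome_of_second a b b' : b != b' -> is_swap (outcome_of a b) (outcome_of a b').
Proof.
by move=> bb'; apply/is_swapP; exists w1 => [|w /negbTE w_1]; rewrite !ffunE ?eqxx ?w_1.
Qed.

Let outcome_of_eq a b a' b' : (outcome_of a b == outcome_of a' b') = (a == a') && (b == b').
Proof.
apply/eqP/andP => [eq_ab | [/eqP-> /eqP->] //].
by split; apply/eqP; [move/ffunP/(_ ord0): eq_ab | move/ffunP/(_ w1): eq_ab]; rewrite !ffunE.
Qed.

Lemma binary_square_cycle : exists F, @cyclic_swaps n'.+2 2 F.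
Proof.
exists [set (outcome_of b1 b0, outcome_of b0 b0); (outcome_of b1 b1, outcome_of b1 b0);
            (outcome_of b0 b1, outcome_of b1 b1); (outcome_of b0 b0, outcome_of b0 b1)].
split.
  move=> p q; rewrite !inE => /orP[/orP[/orP[] | ] | ] /eqP[-> ->]; split;
    by rewrite ?swap_outcome_of_first ?swap_outcome_of_second // !xpair_eqE !outcome_of_eq.
move=> R trR inF; exists (outcome_of b0 b0).
apply: (trR (outcome_of b0 b1)); first by apply: inF; rewrite !inE eqxx !orbT.
apply: (trR (outcome_of b1 b1)); first by apply: inF; rewrite !inE eqxx !orbT.
by apply: (trR (outcome_of b1 b0)); apply: inF; rewrite !inE eqxx ?orbT.
Qed.
End BinarySquareCycle.

Theorem proposition4 (n m k : nat) :
  1 <= n -> 2 <= m -> k <= n - 1 -> (m, k) != (2, 0) ->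
  forall Xs : {set outcome n m * outcome n m},
    swap_orientation Xs ->
    ~ is_maximal (C_ac k Xs) /\ ~ is_maximum (C_ac k Xs).
Proof.
move=> n_gt0 m_ge2 kn mk Xs orientXs.
have [F cycF] : exists F, @cyclic_swaps n m F.
  case: m m_ge2 mk {Xs orientXs} => [|[|[|m']]] // _ mk; last first.
    by case: n n_gt0 {kn} => // n' _; apply: three_value_cycle.
  case: n n_gt0 kn => [|[|n']] // _; last by move=> _; apply: binary_square_cycle.
  by rewrite leqn0 => /eqP k0; rewrite k0 in mk.
apply: (compl_closed_not_maximal (C_ac_neq0 k Xs) (C_ac_compl_closed (k := k) orientXs)).
exact: cyclic_concept_notin_C_ac orientXs cycF.
Qed.
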